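(* Let $\Omega\subset\mathbb{R}^n$ ($n\ge2$) be a bounded domain with Lipschitz boundary and $\zeta,\eta\in M_0(\Omega)$. Then for every $\epsilon>0$ there are constants $N_3=N_3(\epsilon,\eta^+)>0$ and $N_4=N_4(\epsilon,\eta^+,|\Omega|)>0$ such that for all $u\in L^{\zeta(x)+\epsilon}(\Omega)$ $$\int_\Omega|u|^{\zeta(x)}\,\big|\ln|u|\big|^{\eta(x)}dx\le N_3\int_\Omega|u|^{\zeta(x)+\epsilon}dx+N_4.$$
   Context: $M_0(\Omega)$ is the set of measurable $p:\Omega\to[1,\infty]$ with $1\le p^-\le p(x)\le p^+<\infty$ a.e., where $p^-=\operatorname{ess\,inf}_\Omega p$, $p^+=\operatorname{ess\,sup}_\Omega p$. $L^{p(x)}(\Omega)=\{u \text{ measurable}:\int_\Omega|u|^{p(x)}dx<\infty\}$. $|\Omega|$ is the Lebesgue measure of $\Omega$. *)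

From HB Require Import structures.
From mathcomp Require Import all_boot all_order all_algebra.
From mathcomp Require Import all_classical all_reals all_analysis.
Set Implicit Arguments. Unset Strict Implicit. Unset Printing Implicit Defensive.
Import Order.TTheory GRing.Theory Num.Theory.
Import numFieldNormedType.Exports.
Local Open Scope classical_set_scope.
Local Open Scope ring_scope.

(* R^n is modelled as n.-tuple R, which carries the product (= Borel)
   sigma-algebra of the Borel sigma-algebra of R (library instance). *)

Section Euclid.
Variable R : realType.

Definition enormf (k : nat) (v : 'I_k -> R) : R :=
  Num.sqrt (\sum_(i < k) v i ^+ 2).

Variable n : nat.

Definition eball (x : n.-tuple R) (r : R) : set (n.-tuple R) :=
  [set y | enormf (fun i => tnth y i - tnth x i) < r].

Definition is_open_set (A : set (n.-tuple R)) : Prop :=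
  forall x, A x -> exists2 r : R, 0 < r & eball x r `<=` A.

Definition is_connected_set (A : set (n.-tuple R)) : Prop :=
  forall U V, is_open_set U -> is_open_set V -> A `<=` U `|` V ->
    A `&` U `&` V = set0 -> A `&` U = set0 \/ A `&` V = set0.

Definition is_domain (A : set (n.-tuple R)) : Prop :=
  A !=set0 /\ is_open_set A /\ is_connected_set A.

Definition is_bounded_set (A : set (n.-tuple R)) : Prop :=
  exists M : R, forall x, A x -> enormf (fun i => tnth x i) <= M.

Definition topo_boundary (A : set (n.-tuple R)) : set (n.-tuple R) :=
  [set x | forall r : R, 0 < r ->
     (exists y, eball x r y /\ A y) /\ (exists y, eball x r y /\ ~ A y)].

Definition orthogonal_mx (Q : 'M[R]_n) : Prop := Q *m Q^T = 1%:M.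

Definition lipschitz_fun (k : nat) (g : ('I_k -> R) -> R) : Prop :=
  exists L : R, forall a b, `|g a - g b| <= L * enormf (fun i => a i - b i).

Definition first_coords (y : 'I_n -> R) : 'I_n.-1 -> R :=
  fun k => y (widen_ord (leq_pred n) k).
Definition last_coord (y : 'I_n -> R) : R :=
  \sum_(i < n | val i == n.-1) y i.

(* Lipschitz boundary: locally, after a rigid motion, Omega is the region
   below the graph of a Lipschitz function of n-1 variables. *)
Definition lipschitz_boundary (A : set (n.-tuple R)) : Prop :=
  forall x0, topo_boundary A x0 ->
    exists r : R, 0 < r /\
    exists Q : 'M[R]_n, orthogonal_mx Q /\
    exists g : ('I_n.-1 -> R) -> R, lipschitz_fun g /\
    forall x, eball x0 r x ->
      let y := fun i : 'I_n => \sum_(j < n) Q i j * (tnth x j - tnth x0 j) in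
      (A x <-> last_coord y < g (first_coords y)).

(* Lebesgue measure on (the Borel sets of) R^n: the measure giving every
   box ]a,b] its volume (this determines it uniquely). *)
Definition is_lebesgue_measure (mu : {measure set (n.-tuple R) -> \bar R}) : Prop :=
  forall a b : n.-tuple R, (forall i, tnth a i <= tnth b i) ->
    mu [set x | forall i, tnth a i < tnth x i <= tnth b i] =
    (\prod_(i < n) (tnth b i - tnth a i))%:E.

Definition ess_sup_on (mu : {measure set (n.-tuple R) -> \bar R})
  (D : set (n.-tuple R)) (f : n.-tuple R -> R) : \bar R :=
  ereal_inf [set y : \bar R | {ae mu, forall x, D x -> ((f x)%:E <= y)%E}].
Definition ess_inf_on (mu : {measure set (n.-tuple R) -> \bar R})
  (D : set (n.-tuple R)) (f : n.-tuple R -> R) : \bar R :=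
  ereal_sup [set y : \bar R | {ae mu, forall x, D x -> (y <= (f x)%:E)%E}].

Definition M0 (mu : {measure set (n.-tuple R) -> \bar R})
  (D : set (n.-tuple R)) (p : n.-tuple R -> R) : Prop :=
  measurable_fun D p /\ (forall x, D x -> 1 <= p x) /\
  (1%:E <= ess_inf_on mu D p)%E /\ (ess_sup_on mu D p < +oo)%E.

Definition Lpx (mu : {measure set (n.-tuple R) -> \bar R})
  (D : set (n.-tuple R)) (p u : n.-tuple R -> R) : Prop :=
  measurable_fun D u /\
  (\int[mu]_(x in D) (`|u x| `^ p x)%:E < +oo)%E.

End Euclid.

From HB Require Import structures.
From mathcomp Require Import all_boot all_order all_algebra.
From mathcomp Require Import all_classical all_reals all_analysis.
From mathcomp Require Import measurable_realfun.
From mathcomp Require Import ring lra.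
Import Order.TTheory GRing.Theory Num.Theory.
Local Open Scope classical_set_scope.
Local Open Scope ring_scope.
Set Implicit Arguments. Unset Strict Implicit.

(* For t >= 0, z >= 1 and 0 <= e <= m + 1 one has pointwise
     t^z |ln t|^e <= C_eps t^(z + eps) + C_1,
   where C_a bounds s^e by C_a exp(a s) for s >= 0 (from s^e <= 1 + s^(m+1)
   and the Taylor lower bound of exp).  For t <= 1 take s = -ln t and a = 1,
   so t^z |ln t|^e <= t * C_1 / t; for t >= 1 take s = ln t and a = eps, so
   (ln t)^e <= C_eps t^eps.  With m + 1 above ess sup eta, integration gives
   N_3 = C_eps and N_4 = C_1 |Omega| + 1. *)

Section powR_bounds.
Variable R : realType.
Implicit Types a s e t z eps : R.

Lemma powR_le1DXn s e n : 0 <= s -> 0 <= e -> e <= n%:R -> s `^ e <= 1 + s ^+ n.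
Proof.
move=> s0 e0 en; have [s1|s1] := leP s 1.
  rewrite -[s `^ e]addr0 lerD ?exprn_ge0//.
  have [->|sn0] := eqVneq s 0; first by rewrite /powR eqxx; case: (e == 0).
  by rewrite -(powRr0 s) ger_powR // lt_neqAle eq_sym sn0 s0 s1.
by rewrite -[s `^ e]add0r lerD // -(powR_mulrn n s0) ler_powR // ltW.
Qed.

Definition powR_expR_const a n : R := 1 + n.+1`!%:R / a ^+ n.+1.

Lemma powR_expR_const_gt0 a n : 0 < a -> 0 < powR_expR_const a n.
Proof. by move=> a0; rewrite ltr_wpDr // divr_ge0 // ?exprn_ge0 // ltW. Qed.

Lemma powR_le_expR a s e n : 0 < a -> 0 <= s -> 0 <= e -> e <= n.+1%:R ->
  s `^ e <= powR_expR_const a n * expR (a * s).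
Proof.
move=> a0 s0 e0 en; apply: le_trans (powR_le1DXn s0 e0 en) _.
have as0 : 0 <= a * s by rewrite mulr_ge0 // ltW.
rewrite mulrDl mul1r lerD //.
  by apply: le_trans (expR_ge1Dx _); rewrite lerDl.
have -> : s ^+ n.+1 = n.+1`!%:R / a ^+ n.+1 * ((a * s) ^+ n.+1 / n.+1`!%:R).
  by rewrite exprMn; field; rewrite pnatr_eq0 -lt0n fact_gt0 expf_neq0 ?gt_eqF.
rewrite ler_wpM2l ?divr_ge0 ?exprn_ge0 ?ltW //.
by have := expR_ge1Dxn n as0; lra.
Qed.

Lemma powR_ln_powR_le_small t z e n : 0 < t <= 1 -> 1 <= z -> 0 <= e ->
  e <= n.+1%:R -> t `^ z * `|ln t| `^ e <= powR_expR_const 1 n.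
Proof.
move=> /andP[t0 t1] z1 e0 en.
have lnt0 : ln t <= 0 by rewrite ln_le0.
have oppln0 : 0 <= - ln t by rewrite oppr_ge0.
have tz : t `^ z <= t by rewrite ge1r_powR // t0 t1.
have lnte : `|ln t| `^ e <= powR_expR_const 1 n * t^-1.
  have := powR_le_expR ltr01 oppln0 e0 en.
  by rewrite ler0_norm // mul1r expRN lnK ?posrE.
apply: le_trans (ler_pM _ _ tz lnte) _; rewrite ?powR_ge0 //.
by rewrite mulrCA mulfV ?mulr1 // gt_eqF.
Qed.

Lemma powR_ln_powR_le_large eps t z e n : 0 < eps -> 1 <= t -> 0 <= e ->
  e <= n.+1%:R -> t `^ z * `|ln t| `^ e <= powR_expR_const eps n * t `^ (z + eps).
Proof.
move=> eps0 t1 e0 en.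
have tn0 : t != 0 by rewrite gt_eqF // (lt_le_trans ltr01).
have lnt0 : 0 <= ln t by rewrite ln_ge0.
have lnte := powR_le_expR eps0 lnt0 e0 en.
have expR_ln : expR (eps * ln t) = t `^ eps by rewrite /powR (negPf tn0).
rewrite ger0_norm // powRD ?tn0 ?implybT // mulrCA ler_wpM2l ?powR_ge0 //.
by rewrite -expR_ln.
Qed.

Lemma powR_ln_powR_le eps t z e n : 0 < eps -> 0 <= t -> 1 <= z -> 0 <= e ->
  e <= n.+1%:R -> t `^ z * `|ln t| `^ e <=
  powR_expR_const eps n * t `^ (z + eps) + powR_expR_const 1 n.
Proof.
move=> eps0 t0 z1 e0 en.
have C1_gt0 := powR_expR_const_gt0 n (@ltr01 R).
have Ceps_t : 0 <= powR_expR_const eps n * t `^ (z + eps).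
  by rewrite mulr_ge0 ?powR_ge0 // ltW // powR_expR_const_gt0.
have [t_eq0|tn0] := eqVneq t 0.
  rewrite {1}t_eq0 powR0 ?mul0r; first by rewrite addr_ge0 // ltW.
  by rewrite gt_eqF // (lt_le_trans ltr01).
have [t1|t1] := leP t 1.
  have t01 : 0 < t <= 1 by rewrite t1 lt_neqAle eq_sym tn0 t0.
  by apply: le_trans (powR_ln_powR_le_small t01 z1 e0 en) _; rewrite lerDr.
apply: le_trans (powR_ln_powR_le_large z eps0 (ltW t1) e0 en) _.
by rewrite lerDl ltW.
Qed.

End powR_bounds.

Section measure_space.
Context d (T : measurableType d) (R : realType).
Variable mu : {measure set T -> \bar R}.
Implicit Types (D : set T) (f u a b zeta eta : T -> R).

(* The condition [b x != 0] is needed because 0 `^ 0 = 1, whereas the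
   representation a * expR ((b - 1) * ln a) used below vanishes at a = 0. *)
Lemma measurable_fun_powR D a b :
  measurable D -> measurable_fun D a -> measurable_fun D b ->
  (forall x, D x -> 0 <= a x) -> (forall x, D x -> b x != 0) ->
  measurable_fun D (fun x => a x `^ b x).
Proof.
move=> mD ma mb a0 b0.
apply: (eq_measurable_fun (fun x => a x * expR ((b x - 1) * ln (a x)))).
  move=> x; rewrite inE => Dx.
  have [->|an0] := eqVneq (a x) 0; first by rewrite mul0r powR0 // b0.
  rewrite /powR (negPf an0) -{1}(@lnK _ (a x)) ?posrE; last first.
    by rewrite lt_neqAle eq_sym an0 a0.
  by rewrite -expRD; congr expR; ring.
apply: measurable_funM => //; apply: measurableT_comp => //.
apply: measurable_funM; first by apply: measurable_funB.
exact: measurableT_comp.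
Qed.

Lemma measurable_fun_normr_powR D a b :
  measurable D -> measurable_fun D a -> measurable_fun D b ->
  (forall x, D x -> 1 <= b x) -> measurable_fun D (fun x => `|a x| `^ b x).
Proof.
move=> mD ma mb b1; apply: measurable_fun_powR => //.
- exact: measurableT_comp ma.
- by move=> x Dx; rewrite gt_eqF // (lt_le_trans ltr01) ?b1.
Qed.

Lemma ge0_integral_affine D f (k c : R) :
  measurable D -> measurable_fun D f -> (forall x, D x -> 0 <= f x) ->
  0 <= k -> 0 <= c ->
  (\int[mu]_(x in D) (k * f x + c)%:E =
   k%:E * \int[mu]_(x in D) (f x)%:E + c%:E * mu D)%E.
Proof.
move=> mD mf f0 k0 c0.
have mkf : measurable_fun D (fun x => (k * f x)%:E).
  by apply/measurable_EFinP/measurable_funM => //; exact: measurable_cst.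
under eq_integral do rewrite EFinD.
rewrite ge0_integralD //; last by move=> x Dx; rewrite lee_fin mulr_ge0 ?f0.
under eq_integral do rewrite EFinM.
by rewrite ge0_integralZl_EFin ?integral_cst //; exact/measurable_EFinP.
Qed.

Lemma integral_powR_ln_powR_le (eps : R) D u zeta eta m : 0 < eps ->
  measurable D -> measurable_fun D u ->
  measurable_fun D zeta -> measurable_fun D eta ->
  (forall x, D x -> 1 <= zeta x) -> (forall x, D x -> 1 <= eta x) ->
  {ae mu, forall x, D x -> eta x <= m.+1%:R} ->
  (\int[mu]_(x in D) (`|u x| `^ zeta x * `|ln `|u x| | `^ eta x)%:E <=
   (powR_expR_const eps m)%:E * \int[mu]_(x in D) (`|u x| `^ (zeta x + eps))%:E
   + (powR_expR_const 1 m)%:E * mu D)%E.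
Proof.
move=> eps0 mD meas_u mz me z1 e1 eta_m.
have Ceps_gt0 := powR_expR_const_gt0 m eps0.
have C1_gt0 := powR_expR_const_gt0 m (@ltr01 R).
have zeps1 x : D x -> 1 <= zeta x + eps.
  by move=> Dx; rewrite (le_trans (z1 x Dx)) ?lerDl ?ltW.
have mg := measurable_fun_normr_powR mD meas_u
  (measurable_funD mz (measurable_cst eps)) zeps1.
have mlnu : measurable_fun D (fun x => ln `|u x|).
  by apply: measurableT_comp; [exact: measurable_ln | exact: measurableT_comp meas_u].
have mf := measurable_funM (measurable_fun_normr_powR mD meas_u mz z1)
  (measurable_fun_normr_powR mD mlnu me e1).
rewrite -ge0_integral_affine ?powR_ge0 ?(ltW Ceps_gt0) ?(ltW C1_gt0) //.
apply: ae_ge0_le_integral => //.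
- exact/measurable_EFinP.
- by move=> x _; rewrite lee_fin addr_ge0 ?mulr_ge0 ?powR_ge0 // ltW.
- apply/measurable_EFinP/measurable_funD; last exact: measurable_cst.
  by apply: measurable_funM => //; exact: measurable_cst.
apply: filterS eta_m => x eta_m Dx.
by rewrite lee_fin powR_ln_powR_le ?z1 ?eta_m // (le_trans ler01) ?e1.
Qed.

End measure_space.

Lemma ae_lt_ess_sup_on (R : realType) n (mu : {measure set (n.-tuple R) -> \bar R})
    (D : set (n.-tuple R)) (f : n.-tuple R -> R) (c : R) :
  (ess_sup_on mu D f < c%:E)%E -> {ae mu, forall x, D x -> f x < c}.
Proof.
case/ereal_inf_lt => y Sy yc; apply: filterS Sy => x fy Dx.
by rewrite -lte_fin (le_lt_trans (fy Dx)).
Qed.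

Theorem corollary3p3 (R : realType) :
  forall eps : R, 0 < eps ->
  forall etap : R,
  exists2 N3 : R, 0 < N3 &
  forall V : R,
  exists2 N4 : R, 0 < N4 &
  forall (n : nat) (Omega : set (n.-tuple R))
         (mu : {measure set (n.-tuple R) -> \bar R})
         (zeta eta : n.-tuple R -> R),
    (2 <= n)%N ->
    is_lebesgue_measure mu ->
    measurable Omega ->
    is_domain Omega -> is_bounded_set Omega -> lipschitz_boundary Omega ->
    mu Omega = V%:E ->
    M0 mu Omega zeta -> M0 mu Omega eta ->
    ess_sup_on mu Omega eta = etap%:E ->
    forall u : n.-tuple R -> R,
      Lpx mu Omega (fun x => zeta x + eps) u ->
      (\int[mu]_(x in Omega) (`|u x| `^ zeta x * `|ln `|u x| | `^ eta x)%:E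
        <= N3%:E * \int[mu]_(x in Omega) (`|u x| `^ (zeta x + eps))%:E
           + N4%:E)%E.
Proof.
move=> eps eps0 etap.
set m := Num.bound (`|etap| + 1).
have etap_m : etap + 1 <= m.+1%:R.
  have bound_gt : `|etap| + 1 < m%:R by rewrite archi_boundP ?addr_ge0.
  by rewrite -natr1; have := ler_norm etap; lra.
exists (powR_expR_const eps m); first exact: powR_expR_const_gt0.
move=> V; pose C1 : R := powR_expR_const 1 m.
have C1_gt0 : 0 < C1 by exact: powR_expR_const_gt0.
exists (C1 * `|V| + 1); first by rewrite ltr_pwDr // mulr_ge0 // ltW.
move=> n Om mu zeta eta _ _ mOm _ _ _ muOm [mz [z1 _]] [me [e1 _]] esup u [meas_u _].
have eta_le : {ae mu, forall x, Om x -> eta x <= m.+1%:R}.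
  have : (ess_sup_on mu Om eta < (etap + 1)%:E)%E by rewrite esup lte_fin ltrDl.
  move/ae_lt_ess_sup_on; apply: filterS => x eta_lt Omx.
  exact: le_trans (ltW (eta_lt Omx)) etap_m.
apply: le_trans (integral_powR_ln_powR_le eps0 mOm meas_u mz me z1 e1 eta_le) _.
rewrite muOm leeD // -EFinM lee_fin.
have V_ge0 : 0 <= V by rewrite -lee_fin -muOm measure_ge0.
by rewrite ger0_norm // lerDl.
Qed.
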